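(* Consider a generic device in the steady state of the frame-slotted system described in the context, with $M\ge 1$ slots per frame, harvesting probability $\eta\in[0,1]$, maximum degree $\ell_{\max}$, conditional degree distribution $\{\Lambda_{\ell,b}\}$ and steady-state initial battery distribution $\phi=(\phi_0,\dots,\phi_E)$. Then the packet loss rate $P_e$ satisfies $P_e\ge \underline{P_e}$, where $$\underline{P_e}=\phi_0\left(\sum_{y=1}^{M}\eta(1-\eta)^{y-1}\sum_{\ell=0}^{\ell_{\max}}\Lambda_{\ell,0}\,\frac{(y-1)!\,(M-\ell)!}{(y-\ell-1)!\,M!}+(1-\eta)^M\right),$$ with the convention that the factor $\frac{(y-1)!}{(y-\ell-1)!}$ equals $0$ whenever $\ell>y-1$ (so the degree-$0$ term has ratio equal to $1$).
   Context: Time is slotted and grouped into frames of $M$ slots. Each device has a battery of capacity $E$ energy units; each packet (replica) transmission consumes one energy unit. In each slot, independently across slots and devices, a device harvests one energy unit with probability $\eta$ (harvesting pauses when the battery is full); an energy unit harvested in slot $y$ of a frame can be used for a transmission in slot $y$ or later. The initial battery level $B\in\{0,\dots,E\}$ of a device is its battery level at the beginning of a frame; at steady state $\mathbb{P}[B=b]=\phi_b$, and whether a device is active (has an update to send) in a frame is independent of $B$. An active device with initial battery level $b$ draws a degree $L$ with $\mathbb{P}[L=\ell\mid B=b]=\Lambda_{\ell,b}$, $\ell\in\{0,\dots,\ell_{\max}\}$, and then chooses $L$ distinct slots of the frame uniformly at random without replacement (independently of the harvesting process) as the intended positions of $L$ identical replicas of its update. A replica is actually transmitted only if the device has at least one energy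 unit available in that slot; otherwise it is dropped. Degree $0$ means the update is discarded. The packet loss rate $P_e$ is the steady-state probability that the update of an active device in a frame is not successfully decoded by the receiver (in particular, it is lost if the degree is $0$ or if all its intended replicas are dropped). *)

From HB Require Import structures.
From mathcomp Require Import all_boot all_order all_algebra.
Set Implicit Arguments. Unset Strict Implicit. Unset Printing Implicit Defensive.
Import Order.TTheory GRing.Theory Num.Theory.
Local Open Scope ring_scope.

Definition harvest_step (E : nat) (h : bool) (e : nat) : nat :=
  if h && (e < E)%N then e.+1 else e.

(* One slot: state = (battery level, number of replicas actually transmitted).
   The energy harvested in the slot is usable in the same slot. *)
Definition slot_step (E : nat) (tx h : bool) (st : nat * nat) : nat * nat :=
  let e := harvest_step E h st.1 in
  if tx && (0 < e)%N then (e.-1, st.2.+1) else (e, st.2).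

Definition run_frame (E M : nat) (b : nat) (S : {set 'I_M})
    (h : {ffun 'I_M -> bool}) : nat * nat :=
  foldl (fun st (y : 'I_M) => slot_step E (y \in S) (h y) st) (b, 0%N)
        (enum 'I_M).

Definition harvest_prob (R : pzRingType) (M : nat) (eta : R)
    (h : {ffun 'I_M -> bool}) : R :=
  \prod_(y < M) (if h y then eta else 1 - eta).

(* Probability that an active device with initial battery b picks exactly the
   slot set S: degree L = #|S| with prob. Lam L b, then a uniform L-subset. *)
Definition slots_prob (R : fieldType) (M : nat) (Lam : nat -> nat -> R)
    (b : nat) (S : {set 'I_M}) : R :=
  Lam #|S| b / ('C(M, #|S|))%:R.

(* Packet loss rate of an active device: loss b S h is the (conditional)
   probability that the update is not decoded given the device's local
   outcome (initial battery b, intended slots S, harvesting pattern h); it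
   accounts for everything else (other devices, receiver). *)
Definition packet_loss_rate (R : fieldType) (E M : nat) (phi : nat -> R)
    (Lam : nat -> nat -> R) (eta : R)
    (loss : nat -> {set 'I_M} -> {ffun 'I_M -> bool} -> R) : R :=
  \sum_(b < E.+1) \sum_(S : {set 'I_M}) \sum_(h : {ffun 'I_M -> bool})
     phi b * slots_prob Lam b S * harvest_prob eta h * loss b S h.

(* Frame-to-frame transition kernel of the initial battery level: the device
   is active with probability alpha (independently of its battery); an
   inactive device intends no transmission (S = set0). *)
Definition frame_kernel (R : fieldType) (E M : nat) (alpha : R)
    (Lam : nat -> nat -> R) (eta : R) (b b' : nat) : R :=
  (1 - alpha) * (\sum_(h : {ffun 'I_M -> bool})
                   harvest_prob eta h * ((@run_frame E M b set0 h).1 == b')%:R)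
  + alpha * (\sum_(S : {set 'I_M}) \sum_(h : {ffun 'I_M -> bool})
       slots_prob Lam b S * harvest_prob eta h
       * ((@run_frame E M b S h).1 == b')%:R).

(* The lower bound of the paper; (y-1)^_l is the falling factorial
   (y-1)!/(y-l-1)!, which is 0 when l > y-1. *)
Definition Pe_lower (R : fieldType) (M lmax : nat) (phi : nat -> R)
    (Lam : nat -> nat -> R) (eta : R) : R :=
  phi 0%N * (\sum_(1 <= y < M.+1)
      eta * (1 - eta) ^+ (y - 1) *
      \sum_(l < lmax.+1) Lam l 0%N * ((y - 1) ^_ l)%:R * ((M - l)`!)%:R
                          / (M`!)%:R
    + (1 - eta) ^+ M).

From HB Require Import structures.
From mathcomp Require Import all_boot all_order all_algebra.
From mathcomp Require Import ring.
Set Implicit Arguments. Unset Strict Implicit. Unset Printing Implicit Defensive.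
Import Order.TTheory GRing.Theory Num.Theory.
Local Open Scope ring_scope.

(* Only devices starting the frame with an empty battery are counted. Such a
   device transmits nothing when every harvest comes after all of its intended
   slots. Conditioning on the slot y of the first harvest (probability
   eta (1 - eta)^(y-1)) or on no harvest at all (probability (1 - eta)^M),
   this happens when the L chosen slots all lie among the first y - 1, which
   has probability 'C(y-1, L) / 'C(M, L) = (y-1)^_L (M-L)! / M!. *)

Definition harvests_after (M : nat) (S : {set 'I_M}) (h : {ffun 'I_M -> bool}) :=
  [forall i, h i ==> [forall j in S, (j < i)%N]].

Lemma harvests_afterP (M : nat) (S : {set 'I_M}) (h : {ffun 'I_M -> bool}) :
  reflect (forall i j, h i -> j \in S -> (j < i)%N) (harvests_after S h).
Proof.
apply: (iffP forallP) => [H i j hi jS | H i].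
  by move/implyP/(_ hi)/forallP/(_ j)/implyP: (H i); apply.
by apply/implyP => hi; apply/forall_inP => j; apply: H.
Qed.

Section EmptyBattery.
Variables (E M : nat) (S : {set 'I_M}) (h : {ffun 'I_M -> bool}).
Hypothesis hS : harvests_after S h.

Lemma foldl_slot_step_no_tx (s : seq 'I_M) (e n : nat) :
  sorted ltn (map val s) -> e = 0%N \/ {in s, forall y, y \notin S} ->
  (foldl (fun st y => slot_step E (y \in S) (h y) st) (e, n) s).2 = n.
Proof.
(* Invariant: the battery is still empty, or a harvest has already occurred
   and hence no intended slot remains. *)
elim: s e => [|x s IHs] e //= s_sorted inv.
have x_lt_s : all (ltn x) (map val s) := order_path_min ltn_trans s_sorted.
rewrite /slot_step /harvest_step /=.
case xS: (x \in S).
- case: inv => [e0|]; last by move/(_ x (mem_head _ _)); rewrite xS.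
  have -> : h x = false.
    by apply/negbTE/negP => hx; have := harvests_afterP _ _ hS x x hx xS; rewrite ltnn.
  by rewrite e0 /=; apply: IHs (path_sorted s_sorted) _; left.
- apply: IHs (path_sorted s_sorted) _; case hx: (h x); last first.
    by case: inv => [|s_notS]; [left | right => y ys; apply: s_notS; rewrite inE ys orbT].
  right => y ys; apply/negP => yS.
  have y_lt_x := harvests_afterP _ _ hS x y hx yS.
  by have := allP x_lt_s _ (map_f val ys); rewrite /= ltnNge ltnW.
Qed.

Lemma run_frame_empty_battery : (run_frame E 0 S h).2 = 0%N.
Proof.
apply: foldl_slot_step_no_tx; last by left.
by rewrite val_enum_ord iota_ltn_sorted.
Qed.

End EmptyBattery.

Lemma card_ord_lt (M : nat) (y : 'I_M) : #|[set i : 'I_M | (i < y)%N]| = y.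
Proof.
have y_le_M : (y <= M)%N := ltnW (ltn_ord y).
have -> : [set i : 'I_M | (i < y)%N] = [set widen_ord y_le_M j | j in 'I_y].
  apply/setP => i; rewrite inE; apply/idP/imsetP => [i_lt_y | [j _ ->]].
    by exists (Ordinal i_lt_y) => //; apply: val_inj.
  by rewrite /= ltn_ord.
rewrite card_imset ?card_ord // => a b /(congr1 val) ab; exact: val_inj.
Qed.

Lemma natr_forall (R : comPzSemiRingType) (I : finType) (P : pred I) :
  \prod_(i : I) (P i)%:R = [forall i, P i]%:R :> R.
Proof.
have [/forallP P_all | /forallPn [i nPi]] := boolP [forall i, P i].
  by rewrite big1 // => i _; rewrite P_all.
by rewrite (bigD1 i) //= (negbTE nPi) mul0r.
Qed.

Definition no_harvest (M : nat) (h : {ffun 'I_M -> bool}) := [forall i, ~~ h i].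

Definition first_harvest (M : nat) (y : 'I_M) (h : {ffun 'I_M -> bool}) :=
  [forall i : 'I_M, if (i < y)%N then ~~ h i else (i == y) ==> h i].

Lemma first_harvestP (M : nat) (y : 'I_M) (h : {ffun 'I_M -> bool}) :
  reflect (h y /\ forall i : 'I_M, (i < y)%N -> ~~ h i) (first_harvest y h).
Proof.
apply: (iffP forallP) => [H | [hy H] i].
  split=> [|i i_lt_y]; last by have := H i; rewrite i_lt_y.
  by have := H y; rewrite ltnn eqxx.
by case: ltnP => [/H // | _]; apply/implyP => /eqP ->.
Qed.

Lemma no_harvest_or_first_harvest (M : nat) (h : {ffun 'I_M -> bool}) :
  (no_harvest h + \sum_(y < M) first_harvest y h)%N = 1%N.
Proof.
have [h0 | /forallPn [i0 /negbNE hi0]] := boolP (no_harvest h).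
  rewrite big1 // => y _; case: first_harvestP => // -[hy _].
  by move/forallP: h0 => /(_ y); rewrite hy.
case: (arg_minnP (fun i : 'I_M => val i) hi0) => y0 hy0 y0_min.
have first_y0 : first_harvest y0 h.
  apply/first_harvestP; split=> // i i_lt_y0; apply/negP => hi.
  by have := y0_min i hi; rewrite leqNgt i_lt_y0.
rewrite add0n (bigD1 y0) //= first_y0 big1 // => y y_neq_y0.
case: first_harvestP => // -[hy before_y].
have y_ge_y0 := y0_min y hy.
suff y_le_y0 : (y <= y0)%N by rewrite -val_eqE eqn_leq y_le_y0 y_ge_y0 in y_neq_y0.
by rewrite leqNgt; apply/negP => /before_y; rewrite hy0.
Qed.

Lemma harvests_after_no_harvest (M : nat) (S : {set 'I_M}) (h : {ffun 'I_M -> bool}) :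
  no_harvest h -> harvests_after S h.
Proof. by move/forallP=> h0; apply/harvests_afterP => i j hi; have := h0 i; rewrite hi. Qed.

Lemma harvests_after_first_harvest (M : nat) (S : {set 'I_M}) (h : {ffun 'I_M -> bool})
    (y : 'I_M) :
  first_harvest y h -> harvests_after S h = (S \subset [set i : 'I_M | (i < y)%N]).
Proof.
case/first_harvestP => hy before_y; apply/harvests_afterP/subsetP => [H j jS | H i j hi jS].
  by rewrite inE; apply: H hy jS.
have := H j jS; rewrite inE => /leq_trans; apply.
by rewrite leqNgt; apply/negP => /before_y; rewrite hi.
Qed.

Section HarvestProbability.
Variables (R : comPzRingType) (M : nat) (eta : R).

Lemma sum_harvest_prob_forall (c : 'I_M -> pred bool) :
  \sum_(h : {ffun 'I_M -> bool}) harvest_prob eta h * [forall i, c i (h i)]%:R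
  = \prod_(i < M) ((c i true)%:R * eta + (c i false)%:R * (1 - eta)).
Proof.
under eq_bigr do rewrite -natr_forall -big_split /=.
rewrite -(bigA_distr_bigA (fun i b => (if b then eta else 1 - eta) * (c i b)%:R)).
by apply: eq_bigr => i _; rewrite big_bool /= mulrC [(1 - eta) * _]mulrC.
Qed.

Lemma sum_harvest_prob_no_harvest :
  \sum_(h : {ffun 'I_M -> bool}) harvest_prob eta h * (no_harvest h)%:R = (1 - eta) ^+ M.
Proof.
rewrite (sum_harvest_prob_forall (fun _ b => ~~ b)) /=.
by rewrite (eq_bigr (fun _ => 1 - eta)) ?prodr_const ?card_ord // => i _; ring.
Qed.

Lemma sum_harvest_prob_first_harvest (y : 'I_M) :
  \sum_(h : {ffun 'I_M -> bool}) harvest_prob eta h * (first_harvest y h)%:R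
  = eta * (1 - eta) ^+ y.
Proof.
rewrite (sum_harvest_prob_forall (fun i b => if (i < y)%N then ~~ b else (i == y) ==> b)).
rewrite (bigD1 y) //= ltnn eqxx /=; congr (_ * _); first ring.
rewrite (eq_bigr (fun i : 'I_M => if (i < y)%N then 1 - eta else 1)); last first.
  by move=> i /negbTE i_neq_y; case: ltnP => _; rewrite ?i_neq_y /=; ring.
rewrite -big_mkcondr prodr_const -[in RHS]card_ord_lt; congr (_ ^+ _).
by apply: eq_card => i; rewrite inE unfold_in -val_eqE /=; case: ltngtP.
Qed.
End HarvestProbability.

Lemma sum_ord_vanishing (R : nmodType) (m n : nat) (F : nat -> R) :
  (m <= n)%N -> (forall l, (m <= l)%N -> F l = 0) ->
  \sum_(l < n) F l = \sum_(l < m) F l.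
Proof.
move=> m_le_n F0; rewrite (big_ord_widen n F m_le_n) [LHS](bigID (fun l : 'I_n => (l < m)%N)) /=.
by rewrite [X in _ + X]big1 ?addr0 // => l; rewrite -leqNgt => /F0.
Qed.

Lemma bin_ratio_ffact (R : numFieldType) (k M l : nat) : (l <= M)%N ->
  'C(k, l)%:R / 'C(M, l)%:R = (k ^_ l)%:R * ((M - l)`!)%:R / (M`!)%:R :> R.
Proof.
move=> l_le_M; rewrite -bin_ffact -(bin_fact l_le_M) !natrM.
have binM_neq0 : 'C(M, l)%:R != 0 :> R by rewrite pnatr_eq0 -lt0n bin_gt0.
have fact_neq0 n : (n`!)%:R != 0 :> R by rewrite pnatr_eq0 -lt0n fact_gt0.
by field; rewrite binM_neq0 !fact_neq0.
Qed.

Section SlotsProbability.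
Variables (R : fieldType) (M : nat) (Lam : nat -> nat -> R) (b : nat).

Lemma sum_slots_prob_subset (A : {set 'I_M}) :
  \sum_(S : {set 'I_M}) slots_prob Lam b S * (S \subset A)%:R
  = \sum_(l < M.+1) Lam l b / ('C(M, l))%:R * ('C(#|A|, l))%:R.
Proof.
have card_small (S : {set 'I_M}) : (#|S| < M.+1)%N.
  by rewrite ltnS -[X in (_ <= X)%N](card_ord M) max_card.
rewrite (partition_big (fun S => Ordinal (card_small S)) xpredT) //=.
apply: eq_bigr => l _.
rewrite -cards_draws cardsE -sum1_card natr_sum mulr_sumr big_mkcond [RHS]big_mkcond /=.
apply: eq_bigr => S _; rewrite -val_eqE /= /slots_prob unfold_in /=.
by case: eqP => [-> | _]; case: (S \subset A); rewrite ?andbF ?mulr1 ?mulr0.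
Qed.

End SlotsProbability.

Section DegreeBound.
Variables (R : numFieldType) (M lmax : nat) (Lam : nat -> nat -> R) (b : nat).
Hypotheses (lmax_le_M : (lmax <= M)%N)
           (Lam_vanish : forall l, (lmax < l)%N -> Lam l b = 0).

Lemma sum_slots_prob_subset_ffact (A : {set 'I_M}) :
  \sum_(S : {set 'I_M}) slots_prob Lam b S * (S \subset A)%:R
  = \sum_(l < lmax.+1) Lam l b * (#|A| ^_ l)%:R * ((M - l)`!)%:R / (M`!)%:R.
Proof.
pose F l := Lam l b * (#|A| ^_ l)%:R * ((M - l)`!)%:R / (M`!)%:R.
rewrite sum_slots_prob_subset (eq_bigr (fun l : 'I_M.+1 => F l)) => [|l _].
  by apply: sum_ord_vanishing => // l /Lam_vanish; rewrite /F => ->; rewrite !mul0r.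
by rewrite /F -mulrA [_^-1 * _]mulrC bin_ratio_ffact ?mulrA // -ltnS.
Qed.

Lemma sum_slots_prob :
  \sum_(S : {set 'I_M}) slots_prob Lam b S = \sum_(l < lmax.+1) Lam l b.
Proof.
transitivity (\sum_(S : {set 'I_M}) slots_prob Lam b S * (S \subset setT)%:R).
  by apply: eq_bigr => S _; rewrite subsetT mulr1.
rewrite sum_slots_prob_subset_ffact cardsT card_ord; apply: eq_bigr => l _.
have l_le_M : (l <= M)%N by rewrite (leq_trans _ lmax_le_M) // -ltnS.
by rewrite -(mulrA (Lam l b)) -natrM ffact_fact // mulfK // pnatr_eq0 -lt0n fact_gt0.
Qed.

End DegreeBound.

Section EmptyBatteryLossProbability.
Variables (R : numFieldType) (M lmax : nat) (eta : R) (Lam : nat -> nat -> R) (b : nat).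
Hypotheses (lmax_le_M : (lmax <= M)%N)
           (Lam_vanish : forall l, (lmax < l)%N -> Lam l b = 0)
           (Lam_sum1 : \sum_(l < lmax.+1) Lam l b = 1).

Lemma sum_prob_harvests_after :
  \sum_(h : {ffun 'I_M -> bool})
     harvest_prob eta h * \sum_(S : {set 'I_M}) slots_prob Lam b S * (harvests_after S h)%:R
  = \sum_(y < M) eta * (1 - eta) ^+ y *
      \sum_(l < lmax.+1) Lam l b * (y ^_ l)%:R * ((M - l)`!)%:R / (M`!)%:R
    + (1 - eta) ^+ M.
Proof.
pose G (y : 'I_M) :=
  \sum_(l < lmax.+1) Lam l b * (y ^_ l)%:R * ((M - l)`!)%:R / (M`!)%:R.
have decomp h : \sum_(S : {set 'I_M}) slots_prob Lam b S * (harvests_after S h)%:R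
    = (no_harvest h)%:R + \sum_(y < M) (first_harvest y h)%:R * G y.
  have partition : (no_harvest h)%:R + \sum_(y < M) (first_harvest y h)%:R = 1 :> R.
    by rewrite -natr_sum -natrD no_harvest_or_first_harvest.
  rewrite -[LHS]mul1r -{1}partition mulrDl mulr_suml; congr (_ + _).
    have [h0 | _] := boolP (no_harvest h); last by rewrite !mul0r.
    rewrite mul1r -[RHS]Lam_sum1 -(sum_slots_prob lmax_le_M Lam_vanish).
    by apply: eq_bigr => S _; rewrite harvests_after_no_harvest ?mulr1.
  apply: eq_bigr => y _; have [hy | _] := boolP (first_harvest y h); last by rewrite !mul0r.
  rewrite !mul1r /G -(card_ord_lt y) -sum_slots_prob_subset_ffact //.
  by apply: eq_bigr => S _; rewrite (harvests_after_first_harvest _ hy).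
under eq_bigr do rewrite decomp mulrDr mulr_sumr.
rewrite big_split /= addrC sum_harvest_prob_no_harvest exchange_big /=; congr (_ + _).
apply: eq_bigr => y _; rewrite -sum_harvest_prob_first_harvest mulr_suml.
by apply: eq_bigr => h _; rewrite mulrA.
Qed.

End EmptyBatteryLossProbability.

Lemma harvest_prob_ge0 (R : numDomainType) (M : nat) (eta : R) (h : {ffun 'I_M -> bool}) :
  0 <= eta <= 1 -> 0 <= harvest_prob eta h.
Proof.
by case/andP=> eta0 eta1; apply: prodr_ge0 => i _; case: (h i); rewrite ?subr_ge0.
Qed.

Lemma packet_loss_rate_ge_empty_battery (R : numFieldType) (E M : nat) (phi : nat -> R)
    (Lam : nat -> nat -> R) (eta : R)
    (loss : nat -> {set 'I_M} -> {ffun 'I_M -> bool} -> R) :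
  0 <= eta <= 1 -> (forall b, 0 <= phi b) -> (forall l b, 0 <= Lam l b) ->
  (forall b S h, 0 <= loss b S h) ->
  (forall S h, (run_frame E 0 S h).2 = 0%N -> loss 0%N S h = 1) ->
  phi 0%N * \sum_(h : {ffun 'I_M -> bool})
     harvest_prob eta h * \sum_(S : {set 'I_M}) slots_prob Lam 0 S * (harvests_after S h)%:R
  <= packet_loss_rate E phi Lam eta loss.
Proof.
move=> eta01 phi0 Lam0 loss0 loss1.
have weight0 b (S : {set 'I_M}) (h : {ffun 'I_M -> bool}) :
    0 <= phi b * slots_prob Lam b S * harvest_prob eta h.
  by rewrite !mulr_ge0 ?phi0 ?Lam0 ?invr_ge0 ?harvest_prob_ge0.
rewrite /packet_loss_rate (bigD1 ord0) //= -[X in X <= _]addr0 lerD //; last first.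
  by do 3!(apply: sumr_ge0 => ? _); rewrite mulr_ge0 ?loss0.
rewrite exchange_big /= mulr_sumr; apply: (ler_sum (index_enum _)) => h _.
rewrite !mulr_sumr; apply: (ler_sum (index_enum _)) => S _.
rewrite [leLHS](_ : _ = phi 0%N * slots_prob Lam 0 S * harvest_prob eta h * (harvests_after S h)%:R);
  last by ring.
apply: ler_wpM2l => //.
have [hS | _] := boolP (harvests_after S h); last exact: loss0.
by rewrite loss1 // run_frame_empty_battery.
Qed.

Theorem theorem1 (R : realFieldType) (E M lmax : nat) (eta alpha : R)
    (phi : nat -> R) (Lam : nat -> nat -> R)
    (loss : nat -> {set 'I_M} -> {ffun 'I_M -> bool} -> R) :
  (0 < M)%N ->
  (lmax <= M)%N ->
  0 <= eta <= 1 ->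
  0 <= alpha <= 1 ->
  (forall b, 0 <= phi b) ->
  \sum_(b < E.+1) phi b = 1 ->
  (forall l b, 0 <= Lam l b) ->
  (forall l b, (lmax < l)%N -> Lam l b = 0) ->
  (forall b, (b <= E)%N -> \sum_(l < lmax.+1) Lam l b = 1) ->
  (forall b', (b' <= E)%N ->
     phi b' = \sum_(b < E.+1) phi b * frame_kernel E M alpha Lam eta b b') ->
  (forall b S h, 0 <= loss b S h <= 1) ->
  (forall b S h, (@run_frame E M b S h).2 = 0%N -> loss b S h = 1) ->
  Pe_lower M lmax phi Lam eta <= @packet_loss_rate R E M phi Lam eta loss.
Proof.
move=> _ lmax_le_M eta01 _ phi0 _ Lam0 Lam_vanish Lam_sum1 _ loss01 loss1.
apply: le_trans (packet_loss_rate_ge_empty_battery eta01 phi0 Lam0 _ _); last first.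
- by move=> S h; apply: loss1.
- by move=> b S h; case/andP: (loss01 b S h).
rewrite (sum_prob_harvests_after _ lmax_le_M (Lam_vanish^~ 0%N) (Lam_sum1 0%N (leq0n E))).
rewrite /Pe_lower big_add1 big_mkord /=.
by under eq_bigr do rewrite subn1.
Qed.
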